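(* For all terms $t,t'$ and every environment $\gamma$: if $t\,\llbracket\forall X.X\to X\rrbracket_\gamma\,t'$, then $t\,\llbracket\forall X.X\to X\rrbracket_\gamma\,I$, where $I=\lambda x.x$.
   Context: Terms are those of the pure untyped $\lambda$-calculus, up to $\alpha$-equivalence; $=_{\beta\eta}$ is $\beta\eta$-convertibility. A relation on terms is $\beta\eta$-closed if closed under replacing either related term by a $\beta\eta$-equal one; $\mathcal{R}$ is the set of such relations; environments $\gamma$ map finitely many type variables to $\mathcal{R}$. Interpretation of types: $\llbracket X\rrbracket_\gamma=\gamma(X)$; $t\,\llbracket R\to R'\rrbracket_\gamma\,t'$ iff for all $a,a'$ with $a\,\llbracket R\rrbracket_\gamma\,a'$, $t\,a\,\llbracket R'\rrbracket_\gamma\,t'\,a'$; $\llbracket \forall X.R\rrbracket_\gamma=\bigcap_{r\in\mathcal{R}}\llbracket R\rrbracket_{\gamma[X\mapsto r]}$. *)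

(* Pure untyped lambda calculus with de Bruijn indices
   (so terms are identified up to alpha-equivalence by construction). *)
From Stdlib Require Import Arith List Relations.
Import ListNotations.

Inductive term : Type :=
| Var : nat -> term
| App : term -> term -> term
| Lam : term -> term.

Fixpoint lift (k c : nat) (t : term) : term :=
  match t with
  | Var n => if Nat.ltb n c then Var n else Var (n + k)
  | App t1 t2 => App (lift k c t1) (lift k c t2)
  | Lam t1 => Lam (lift k (S c) t1)
  end.

Fixpoint subst (u : term) (c : nat) (t : term) : term :=
  match t with
  | Var n =>
      if Nat.ltb n c then Var n
      else if Nat.eqb n c then lift c 0 u
      else Var (pred n)
  | App t1 t2 => App (subst u c t1) (subst u c t2)
  | Lam t1 => Lam (subst u (S c) t1)
  end.

Inductive bstep : term -> term -> Prop :=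
| st_beta : forall t u, bstep (App (Lam t) u) (subst u 0 t)
| st_eta : forall t, bstep (Lam (App (lift 1 0 t) (Var 0))) t
| st_appl : forall t t' u, bstep t t' -> bstep (App t u) (App t' u)
| st_appr : forall t u u', bstep u u' -> bstep (App t u) (App t u')
| st_lam : forall t t', bstep t t' -> bstep (Lam t) (Lam t').

Definition beq : relation term := clos_refl_sym_trans term bstep.

Definition bclosed (r : term -> term -> Prop) : Prop :=
  forall t1 t1' t2 t2', beq t1 t1' -> beq t2 t2' -> r t1 t2 -> r t1' t2'.

Definition CRel : Type := { r : term -> term -> Prop | bclosed r }.

Inductive ty : Type :=
| TVar : nat -> ty
| TArr : ty -> ty -> ty
| TAll : nat -> ty -> ty.

(* environments: finitely many type variables mapped to beta-eta-closed
   relations; variables outside the domain are interpreted by the empty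
   relation (irrelevant for closed types) *)
Definition env : Type := list (nat * CRel).

Fixpoint lookup (g : env) (X : nat) : term -> term -> Prop :=
  match g with
  | [] => fun _ _ => False
  | (Y, r) :: g' => if Nat.eqb X Y then proj1_sig r else lookup g' X
  end.

Fixpoint interp (g : env) (A : ty) : term -> term -> Prop :=
  match A with
  | TVar X => lookup g X
  | TArr A1 A2 => fun t t' =>
      forall a a', interp g A1 a a' -> interp g A2 (App t a) (App t' a')
  | TAll X A1 => fun t t' => forall r : CRel, interp ((X, r) :: g) A1 t t'
  end.

Definition Iterm : term := Lam (Var 0).

Definition IdTy : ty := TAll 0 (TArr (TVar 0) (TVar 0)).

(* Instantiate X with the relation "x ~ y iff x r a'", which forgets its right
   argument: the hypothesis then yields (t a) r a', and I a' is beta-convertible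
   to a'. *)
From Stdlib Require Import Arith Relations.

Lemma lift_0 (c : nat) (t : term) : lift 0 c t = t.
Proof.
  revert c; induction t as [n | t1 IH1 t2 IH2 | t1 IH1]; intros c; simpl.
  - destruct (Nat.ltb n c); [reflexivity | now rewrite Nat.add_0_r].
  - now rewrite IH1, IH2.
  - now rewrite IH1.
Qed.

Lemma beq_Iterm_app (u : term) : beq (App Iterm u) u.
Proof.
  apply rst_step.
  rewrite <- (lift_0 0 u) at 2.
  exact (st_beta (Var 0) u).
Qed.

Definition fix_right (r : CRel) (b : term) : term -> term -> Prop :=
  fun x _ => proj1_sig r x b.

Lemma bclosed_fix_right (r : CRel) (b : term) : bclosed (fix_right r b).
Proof.
  intros x x' y y' Ex _ Hx.
  exact (proj2_sig r x x' b b Ex (rst_refl _ _ b) Hx).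
Qed.

Lemma interp_IdTy (g : env) (t t' : term) :
  interp g IdTy t t' <->
  forall (r : CRel) (a a' : term),
    proj1_sig r a a' -> proj1_sig r (App t a) (App t' a').
Proof. reflexivity. Qed.

Theorem mainTheorem14 :
  forall (t t' : term) (g : env),
    interp g IdTy t t' -> interp g IdTy t Iterm.
Proof.
  intros t t' g H.
  apply interp_IdTy; intros r a a' Ha.
  assert (Hta : proj1_sig r (App t a) a').
  { exact (proj1 (interp_IdTy g t t') H
             (exist _ (fix_right r a') (bclosed_fix_right r a')) a a' Ha). }
  exact (proj2_sig r _ _ _ _ (rst_refl _ _ _)
           (rst_sym _ _ _ _ (beq_Iterm_app a')) Hta).
Qed.
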